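(* A profile $(D_n,G_n,\mathbf q_n)_{n\in\mathcal N}$ is a Variational Equilibrium of the peer-to-peer game if and only if it is an optimal solution of the centralized problem (P). That is, the set of Variational Equilibria coincides with the set of social welfare maximizers.
   Context: Model. $\mathcal N$ is a finite set of nodes (agents) containing a root node $0$. Each node $n$ has a neighborhood $\Omega_n\subseteq\mathcal N$ with $n\in\Omega_n$; the neighbor relation is symmetric ($m\in\Omega_n\iff n\in\Omega_m$) and every node is a neighbor of the root. Decision variables: demand $D_n$, flexibility activation $G_n$, and for each $m\in\Omega_n\setminus\{n\}$ a trade $q_{mn}\in\mathbb R$ (quantity sent from $m$ to $n$; $q_{mn}>0$ means $n$ buys from $m$). The net import of $n$ is $Q_n=\sum_{m\in\Omega_n\setminus\{n\}}q_{mn}$. Parameters: $0\le\underline D_n\le\overline D_n$, $0\le\underline G_n\le\overline G_n$, capacities $\kappa_{nm}=\kappa_{mn}\in[0,\infty)$, exogenous renewable generation $\Delta G_n$, constants $a_n,b_n,d_n>0$, $\tilde a_n,\tilde b_n>0$, target demand $D_n^\star$, preference prices $c_{nm}>0$. Costs/utilities: $C_n(G)=\tfrac12 a_nG^2+b_nG+d_n$, $U_n(D)=-\tilde a_n(D-D_n^\star)^2+\tilde b_n$, $\tilde C_n(\mathbf q_n)=\sum_{m\in\Omega_n\setminus\{n\}}c_{nm}q_{mn}$, $\Pi_n=U_n(D_n)-C_n(G_n)-\tilde C_n(\mathbf q_n)$, $SW=\sum_{n\in\mathcal N}\Pi_n$. Centralized problem (P): maximize $SW$ over $(\mathbf D,\mathbf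 G,\mathbf q)$ subject to (1) $\underline D_n\le D_n\le\overline D_n$; (2) $\underline G_n\le G_n\le\overline G_n$; (3) $q_{mn}\le\kappa_{mn}$ for all $n$ and $m\in\Omega_n\setminus\{n\}$; (4) $q_{mn}+q_{nm}\le0$ for each pair of distinct neighbors; (5) $D_n=G_n+\Delta G_n+Q_n$ for all $n$. Peer-to-peer game: agent $n$ controls $(D_n,G_n,\mathbf q_n)$ with $\mathbf q_n=(q_{mn})_{m\in\Omega_n\setminus\{n\}}$ and, taking the other agents' variables as given, maximizes $\Pi_n$ subject to $\underline D_n\le D_n\le\overline D_n$ (multipliers $\underline\mu_n,\overline\mu_n$), $\underline G_n\le G_n\le\overline G_n$ ($\underline\nu_n,\overline\nu_n$), $q_{mn}\le\kappa_{mn}$ for $m\in\Omega_n\setminus\{n\}$ ($\xi_{nm}$), the coupling constraints $q_{mn}\le-q_{nm}$ for $m\in\Omega_n\setminus\{n\}$ ($\zeta_{nm}$), and $D_n=G_n+\Delta G_n+Q_n$ ($\lambda_n$). The system $KKT_n$ consists of $2\tilde a_n(D_n-D_n^\star)-\underline\mu_n+\overline\mu_n+\lambda_n=0$, $a_nG_n+b_n-\underline\nu_n+\overline\nu_n-\lambda_n=0$, $c_{nm}+\xi_{nm}+\zeta_{nm}-\lambda_n=0$ for $m\in\Omega_n\setminus\{n\}$, feasibility, and complementarity $0\le\underline\mu_n\perp D_n-\underline D_n\ge0$, $0\le\overline\mu_n\perp\overline D_n-D_n\ge0$, $0\le\underline\nu_n\perp G_n-\underline G_n\ge0$, $0\le\overline\nu_n\perp\overline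 G_n-G_n\ge0$, $0\le\xi_{nm}\perp\kappa_{mn}-q_{mn}\ge0$, $0\le\zeta_{nm}\perp-q_{mn}-q_{nm}\ge0$ for all $m\in\Omega_n\setminus\{n\}$. A Generalized Nash Equilibrium (GNE) is a profile such that for each $n$ there are multipliers with $KKT_n$ satisfied (equivalently, each agent's variables solve her problem given the others'). A Variational Equilibrium is a GNE whose multipliers can be chosen so that in addition $\zeta_{nm}=\zeta_{mn}$ for all $n$ and $m\in\Omega_n\setminus\{n\}$. *)

From HB Require Import structures.
From mathcomp Require Import all_boot all_order all_algebra.
Set Implicit Arguments. Unset Strict Implicit. Unset Printing Implicit Defensive.
Import Order.TTheory GRing.Theory Num.Theory.
Local Open Scope ring_scope.

Record params (N : finType) (R : realFieldType) := Params {
  root : N;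
  Om : rel N;                   (* m \in Omega_n  <->  Om n m *)
  Dlo : N -> R; Dhi : N -> R;
  Glo : N -> R; Ghi : N -> R;
  kappa : N -> N -> R;
  dG : N -> R;                  (* renewable generation Delta G_n *)
  ca : N -> R; cb : N -> R; cd : N -> R;   (* a_n, b_n, d_n *)
  ua : N -> R; ub : N -> R;                 (* tilde a_n, tilde b_n *)
  Dstar : N -> R;
  c : N -> N -> R
}.

Definition nbr N R (P : params N R) (n m : N) : bool := Om P n m && (m != n).

Definition valid_params N R (P : params N R) : Prop :=
  [/\ (forall n, Om P n n),
      (forall n m, Om P n m = Om P m n),
      (forall n, Om P (root P) n)
    & [/\ (forall n, 0 <= Dlo P n <= Dhi P n),
      (forall n, 0 <= Glo P n <= Ghi P n),
      (forall n m, kappa P n m = kappa P m n /\ 0 <= kappa P n m),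
      (forall n, [/\ 0 < ca P n, 0 < cb P n, 0 < cd P n, 0 < ua P n & 0 < ub P n])
    & (forall n m, nbr P n m -> 0 < c P n m)]].

(* A profile: D n, G n, and q m n = quantity sent from m to n
   (only entries with nbr P n m are meaningful). *)
Definition Qnet N R (P : params N R) (q : N -> N -> R) (n : N) : R :=
  \sum_(m | nbr P n m) q m n.

Definition costC N R (P : params N R) (n : N) (g : R) : R :=
  ca P n * g ^+ 2 / 2%:R + cb P n * g + cd P n.
Definition utilU N R (P : params N R) (n : N) (x : R) : R :=
  - (ua P n * (x - Dstar P n) ^+ 2) + ub P n.
Definition costCt N R (P : params N R) (q : N -> N -> R) (n : N) : R :=
  \sum_(m | nbr P n m) c P n m * q m n.
Definition payoff N R (P : params N R) (D G : N -> R) (q : N -> N -> R) (n : N) : R :=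
  utilU P n (D n) - costC P n (G n) - costCt P q n.
Definition SW N R (P : params N R) (D G : N -> R) (q : N -> N -> R) : R :=
  \sum_n payoff P D G q n.

Definition feasible N R (P : params N R) (D G : N -> R) (q : N -> N -> R) : Prop :=
  forall n,
    [/\ Dlo P n <= D n <= Dhi P n,
        Glo P n <= G n <= Ghi P n,
        (forall m, nbr P n m -> q m n <= kappa P m n),
        (forall m, nbr P n m -> q m n + q n m <= 0)
      & D n = G n + dG P n + Qnet P q n].

Definition optimal N R (P : params N R) (D G : N -> R) (q : N -> N -> R) : Prop :=
  feasible P D G q /\
  forall D' G' q', feasible P D' G' q' -> SW P D' G' q' <= SW P D G q.

(* The system KKT_n with multipliers
   mul = underline mu_n, mu = overline mu_n, nul = underline nu_n,
   nu = overline nu_n, lam = lambda_n, xi m = xi_{nm}, zeta m = zeta_{nm}. *)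
Definition KKT N R (P : params N R) (D G : N -> R) (q : N -> N -> R) (n : N)
  (mul mu nul nu lam : R) (xi zeta : N -> R) : Prop :=
  [/\ [/\ 2%:R * ua P n * (D n - Dstar P n) - mul + mu + lam = 0,
      ca P n * G n + cb P n - nul + nu - lam = 0
    & (forall m, nbr P n m -> c P n m + xi m + zeta m - lam = 0)],
      [/\ Dlo P n <= D n <= Dhi P n,
          Glo P n <= G n <= Ghi P n,
          (forall m, nbr P n m -> q m n <= kappa P m n),
          (forall m, nbr P n m -> q m n <= - q n m)
        & D n = G n + dG P n + Qnet P q n],
      [/\ (0 <= mul /\ mul * (D n - Dlo P n) = 0),
          (0 <= mu /\ mu * (Dhi P n - D n) = 0),
          (0 <= nul /\ nul * (G n - Glo P n) = 0)
        & (0 <= nu /\ nu * (Ghi P n - G n) = 0)]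
    & forall m, nbr P n m ->
        (0 <= xi m /\ xi m * (kappa P m n - q m n) = 0) /\
        (0 <= zeta m /\ zeta m * (- q m n - q n m) = 0)].

Definition GNE N R (P : params N R) (D G : N -> R) (q : N -> N -> R) : Prop :=
  forall n, exists mul mu nul nu lam : R, exists xi zeta : N -> R,
    KKT P D G q n mul mu nul nu lam xi zeta.

(* Variational Equilibrium: a GNE whose multipliers can be chosen with
   zeta_{nm} = zeta_{mn}.  zeta n m stands for zeta_{nm}. *)
Definition VE N R (P : params N R) (D G : N -> R) (q : N -> N -> R) : Prop :=
  exists (mul mu nul nu lam : N -> R) (xi zeta : N -> N -> R),
    (forall n, KKT P D G q n (mul n) (mu n) (nul n) (nu n) (lam n) (xi n) (zeta n)) /\
    (forall n m, nbr P n m -> zeta n m = zeta m n).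

From HB Require Import structures.
From mathcomp Require Import all_boot all_order all_algebra.
From mathcomp Require Import ring lra.
From Stdlib Require Import Classical FunctionalExtensionality.
Import Order.TTheory GRing.Theory Num.Theory.
Local Open Scope ring_scope.

(* The social welfare is a concave quadratic function of the profile
   x = (D, G, q) and the feasible set of (P) is a polyhedron.  We first show,
   for any problem "maximize a concave quadratic F subject to finitely many
   linear constraints dot (A j) x <= b j", that a feasible point is a
   maximizer iff it admits KKT multipliers (kkt_iff).  Sufficiency is the
   concavity inequality; necessity applies Farkas' lemma (farkas, proved over
   an arbitrary real field by induction on the number of vectors) to the
   active constraints.  Finally the KKT multipliers of (P) and the multipliers
   of a Variational Equilibrium are translated into each other: the
   symmetric zeta_{nm} = zeta_{mn} is carried by the pairing constraints of
   (m, n) and (n, m), and lambda_n by the two halves of the balance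
   equation (5). *)

Section FiniteVectors.
Context {R : realFieldType} {I : finType}.
Implicit Types (u v x : I -> R) (k : R).

Definition dot u v : R := \sum_i u i * v i.

Lemma dotC u v : dot u v = dot v u.
Proof. by apply: eq_bigr => i _; rewrite mulrC. Qed.

Lemma dotDl u v x : dot (fun i => u i + v i) x = dot u x + dot v x.
Proof. by rewrite /dot -big_split; apply: eq_bigr => i _; rewrite mulrDl. Qed.

Lemma dotBl u v x : dot (fun i => u i - v i) x = dot u x - dot v x.
Proof. by rewrite /dot -sumrB; apply: eq_bigr => i _; rewrite mulrBl. Qed.

Lemma dotNl u x : dot (fun i => - u i) x = - dot u x.
Proof. by rewrite /dot -sumrN; apply: eq_bigr => i _; rewrite mulNr. Qed.

Lemma dotZl k u x : dot (fun i => k * u i) x = k * dot u x.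
Proof. by rewrite /dot mulr_sumr; apply: eq_bigr => i _; rewrite mulrA. Qed.

Lemma dotBZl u k v x : dot (fun i => u i - k * v i) x = dot u x - k * dot v x.
Proof. by rewrite (dotBl u (fun i => k * v i)) dotZl. Qed.

Lemma dot_self_le0 u : dot u u <= 0 -> forall i, u i = 0.
Proof.
move=> le0 i; have sq_ge0 j : 0 <= u j * u j by rewrite -expr2 sqr_ge0.
have /eqP : dot u u = 0 by apply/le_anti; rewrite le0 sumr_ge0.
rewrite psumr_eq0 // => /allP /(_ i (mem_index_enum i)) /=.
by rewrite mulf_eq0 orbb => /eqP.
Qed.

(* Projection of v along b onto the hyperplane orthogonal to x0; the
   transpose of this projection is the projection of x along x0 onto the
   hyperplane orthogonal to b. *)
Definition proj b x0 v : I -> R := fun i => v i - dot v x0 / dot b x0 * b i.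

Lemma dot_proj b x0 v x : dot (proj b x0 v) x = dot v (proj x0 b x).
Proof.
rewrite /proj dotBZl [RHS]dotC dotBZl.
by rewrite [dot x0 v]dotC [dot x0 b]dotC [dot x b]dotC [dot x v]dotC; ring.
Qed.

Lemma dot_proj_self b x0 x : dot b x0 != 0 -> dot b (proj x0 b x) = 0.
Proof.
move=> nz; rewrite -dot_proj /proj dotBZl.
by rewrite divff ?mul1r ?subrr.
Qed.

(* By induction on r, projecting
   everything along the first vector when it is not redundant. *)
Lemma farkas (J : eqType) (r : seq J) (A : J -> I -> R) (c : I -> R) :
  uniq r ->
  (forall x, (forall j, j \in r -> dot (A j) x <= 0) -> dot c x <= 0) ->
  exists2 y : J -> R, (forall j, 0 <= y j) &
                      forall i, c i = \sum_(j <- r) y j * A j i.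
Proof.
elim: r A c => [|j0 s IH] A c.
  move=> _ Hc; have /dot_self_le0 c0 : dot c c <= 0 by apply: Hc.
  by exists (fun=> 0) => // i; rewrite big_nil c0.
move=> /= /andP[j0s uniq_s] Hc.
have sum_upd (y : J -> R) t i :
    \sum_(j <- s) (if j == j0 then t else y j) * A j i = \sum_(j <- s) y j * A j i.
  by apply: eq_big_seq => j js; case: eqP js j0s => // ->->.
case: (classic (forall x, (forall j, j \in s -> dot (A j) x <= 0) -> dot c x <= 0)).
  move=> /(IH A c uniq_s) [y y_ge0 Hy].
  exists (fun j => if j == j0 then 0 else y j); first by move=> j; case: ifP.
  by move=> i; rewrite big_cons eqxx mul0r add0r sum_upd.
move=> /not_all_ex_not [x0 Hx0]; have [x0s /negP] := imply_to_and _ _ Hx0.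
rewrite -ltNge => cx0.
set b := A j0; have bx0 : 0 < dot b x0.
  rewrite ltNge; apply/negP => bx0; suff : dot c x0 <= 0 by rewrite leNgt cx0.
  by apply: Hc => j; rewrite inE => /predU1P [->|/x0s].
have bx0_nz : dot b x0 != 0 by rewrite gt_eqF.
have Hproj x : (forall j, j \in s -> dot (proj b x0 (A j)) x <= 0) ->
               dot (proj b x0 c) x <= 0.
  move=> Hx; rewrite dot_proj; apply: Hc => j; rewrite inE.
  by case/predU1P => [->|js]; [rewrite dot_proj_self // | rewrite -dot_proj Hx].
have [y y_ge0 Hy] := IH (fun j => proj b x0 (A j)) (proj b x0 c) uniq_s Hproj.
pose S := \sum_(j <- s) y j * dot (A j) x0.
have S_le0 : S <= 0.
  by rewrite /S big_seq sumr_le0 // => j js; rewrite mulr_ge0_le0 ?x0s.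
pose t := (dot c x0 - S) / dot b x0.
exists (fun j => if j == j0 then t else y j).
  move=> j; case: ifP => // _; rewrite divr_ge0 ?(ltW bx0) //.
  by rewrite subr_ge0 ltW ?(le_lt_trans S_le0).
move=> i; rewrite big_cons eqxx sum_upd; move: (Hy i); rewrite /proj.
under eq_bigr do rewrite mulrBr !mulrA.
rewrite sumrB -!mulr_suml -/S => Hi.
have -> : c i = \sum_(j <- s) y j * A j i - S / dot b x0 * b i
                + dot c x0 / dot b x0 * b i.
  by rewrite -Hi; ring.
by rewrite /t /b; ring.
Qed.

Lemma small_step (J : finType) (P : pred J) (a s : J -> R) :
  (forall j, P j -> 0 < s j) -> exists2 t, 0 < t & forall j, P j -> t * a j <= s j.
Proof.
move=> s_gt0; pose M := \sum_(j | P j) `|a j| / s j.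
have M_ge0 : 0 <= M by rewrite sumr_ge0 // => j Pj; rewrite divr_ge0 // ltW ?s_gt0.
have M1_gt0 : 0 < 1 + M by rewrite ltr_pwDl.
exists (1 + M)^-1; first by rewrite invr_gt0.
move=> j Pj; have sj := s_gt0 j Pj.
have aj_le : `|a j| / s j <= M.
  rewrite /M (bigD1 j) //= lerDl sumr_ge0 // => k /andP[Pk _].
  by rewrite divr_ge0 // ltW ?s_gt0.
apply: (@le_trans _ _ ((1 + M)^-1 * `|a j|)).
  by rewrite ler_pM2l ?invr_gt0 ?ler_norm.
have -> : `|a j| = `|a j| / s j * s j by rewrite mulfVK // gt_eqF.
rewrite mulrA -[X in _ <= X]mul1r ler_pM2r // mulrC ler_pdivrMr // mul1r.
by rewrite (le_trans aj_le) // lerDr.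
Qed.

(* F is described by its expansion around the candidate xs: gradient g and
   nonnegative curvature h. *)
Section ConcaveQuadraticProgram.
Context {J : finType}.
Variables (A : J -> I -> R) (b : J -> R).
Variables (F : (I -> R) -> R) (g : I -> R) (h : (I -> R) -> R) (xs : I -> R).
Hypothesis h_ge0 : forall d, 0 <= h d.
Hypothesis F_expand :
  forall d t, F (fun i => xs i + t * d i) = F xs + t * dot g d - t ^+ 2 * h d.
Hypothesis xs_admissible : forall j, dot (A j) xs <= b j.

Definition admissible x := forall j, dot (A j) x <= b j.

Definition maximizer := forall x, admissible x -> F x <= F xs.

Definition kkt_multipliers (y : J -> R) :=
  (forall j, 0 <= y j /\ y j * (b j - dot (A j) xs) = 0) /\
  forall i, g i = \sum_j y j * A j i.

(* Sufficiency: F lies below its tangent, which the multipliers bound. *)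
Lemma kkt_sufficient y : kkt_multipliers y -> maximizer.
Proof.
move=> [y_ok g_comb] x x_adm; pose d i := x i - xs i.
have -> : x = (fun i => xs i + 1 * d i).
  by apply: functional_extensionality => i; rewrite /d; ring.
rewrite F_expand expr1n !mul1r.
suff : dot g d <= 0 by have := h_ge0 d; lra.
have -> : dot g d = \sum_j y j * dot (A j) d.
  rewrite /dot (eq_bigr (fun i => \sum_j y j * (A j i * d i))); last first.
    by move=> i _; rewrite g_comb mulr_suml; apply: eq_bigr => j _; rewrite mulrA.
  by rewrite exchange_big; apply: eq_bigr => j _; rewrite mulr_sumr.
rewrite sumr_le0 // => j _; have [y_ge0 compl] := y_ok j.
have -> : y j * dot (A j) d = y j * (dot (A j) x - b j).
  by rewrite dotC /d dotBl !(dotC _ (A j)); move: compl; lra.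
by rewrite mulr_ge0_le0 // subr_le0.
Qed.

Lemma maximizer_no_ascent : maximizer ->
  forall d, (forall j, dot (A j) xs = b j -> dot (A j) d <= 0) -> dot g d <= 0.
Proof.
move=> xs_max d d_tangent; rewrite leNgt; apply/negP => gd_gt0.
pose slack j := b j - dot (A j) xs.
pose relevant (k : option J) := if k is Some j then dot (A j) xs != b j else true.
(* Besides the inactive constraints, the step must keep t * h d < dot g d. *)
pose a (k : option J) := if k is Some j then dot (A j) d else h d.
pose s (k : option J) := if k is Some j then slack j else dot g d / 2%:R.
have [|t t_gt0 t_small] := @small_step _ relevant a s.
  case=> [j /= inactive|_ /=]; last by rewrite divr_gt0.
  rewrite /slack subr_gt0 lt_neqAle xs_admissible andbT.
  by apply: contraNneq inactive => ->.
have : F (fun i => xs i + t * d i) <= F xs.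
  apply: xs_max => j; rewrite dotC (dotDl xs (fun i => t * d i)) dotZl !(dotC _ (A j)).
  have [active|inactive] := eqVneq (dot (A j) xs) (b j).
    by rewrite -active gerDl mulr_ge0_le0 ?(ltW t_gt0) ?d_tangent.
  by have := t_small (Some j) inactive; rewrite /= /slack; lra.
rewrite F_expand; have := t_small None isT; rewrite /=.
have : 0 < t * dot g d by rewrite mulr_gt0.
rewrite expr2; nra.
Qed.

(* Necessity: Farkas' lemma on the active constraints; inactive ones get
   multiplier 0. *)
Lemma kkt_necessary : maximizer -> exists y, kkt_multipliers y.
Proof.
move=> /maximizer_no_ascent no_ascent.
pose active j := dot (A j) xs == b j.
have [y y_ge0 g_comb] : exists2 y : J -> R, (forall j, 0 <= y j) &
    forall i, g i = \sum_(j <- [seq j <- index_enum J | active j]) y j * A j i.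
  apply: farkas; first by rewrite filter_uniq ?index_enum_uniq.
  move=> d Hd; apply: no_ascent => j aj.
  by apply: Hd; rewrite mem_filter mem_index_enum andbT; apply/eqP.
exists (fun j => if active j then y j else 0); split.
  move=> j; case: ifP => [/eqP ->|_]; last by rewrite mul0r.
  by rewrite subrr mulr0.
move=> i; rewrite g_comb big_filter big_mkcond.
by apply: eq_bigr => j _; case: ifP; rewrite ?mul0r.
Qed.

Theorem kkt_iff : maximizer <-> exists y, kkt_multipliers y.
Proof.
split; first exact: kkt_necessary.
by case=> y; exact: kkt_sufficient.
Qed.

End ConcaveQuadraticProgram.
End FiniteVectors.

Arguments kkt_iff {R I J A b F g h xs}.

Section Sifting.
Context {R : realFieldType} {T : finType}.
Implicit Types (f g c : T -> R).

Lemma sum_delta_l (t0 : T) f : \sum_t (t == t0)%:R * f t = f t0.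
Proof.
rewrite (bigD1 t0) //= eqxx mul1r big1 ?addr0 // => t /negPf ->.
by rewrite mul0r.
Qed.

Lemma sum_delta_r (t0 : T) f : \sum_t f t * (t0 == t)%:R = f t0.
Proof.
by rewrite -[RHS](sum_delta_l t0); apply: eq_bigr => t _; rewrite mulrC eq_sym.
Qed.

Lemma sum_mul0l f : \sum_t 0 * f t = 0.
Proof. by rewrite big1 // => t _; rewrite mul0r. Qed.

Lemma sum_mul0r f : \sum_t f t * 0 = 0.
Proof. by rewrite big1 // => t _; rewrite mulr0. Qed.

Lemma sum_Nmul f g : \sum_t - f t * g t = - \sum_t f t * g t.
Proof. by rewrite -sumrN; apply: eq_bigr => t _; rewrite mulNr. Qed.

Lemma sum_mulN f g : \sum_t f t * - g t = - \sum_t f t * g t.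
Proof. by rewrite -sumrN; apply: eq_bigr => t _; rewrite mulrN. Qed.

Lemma sum_mulD f g c : \sum_t f t * (g t + c t) = \sum_t f t * g t + \sum_t f t * c t.
Proof. by rewrite -big_split; apply: eq_bigr => t _; rewrite mulrDr. Qed.

Lemma sum_mulA f g c : \sum_t f t * (c t * g t) = \sum_t (f t * c t) * g t.
Proof. by apply: eq_bigr => t _; rewrite mulrA. Qed.

End Sifting.

(* Index of the decision variables D_n, G_n and q_{mn} (one for every
   ordered pair), and of the linear constraints of (P): the bounds
   D_n >= Dlo, D_n <= Dhi, G_n >= Glo, G_n <= Ghi, the capacities and the
   pairings q_{mn} + q_{nm} <= 0 (for every ordered pair), and the balance
   equation (5) split into two opposite inequalities. *)
Notation vars N := ((N + N) + (N * N))%type.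
Notation csts N := (((N + N) + (N + N)) + (((N * N) + (N * N)) + (N + N)))%type.

Section Encoding.
Context {N : finType} {R : realFieldType} (P : params N R).
Local Notation var := (vars N).
Local Notation cst := (csts N).

Definition profile (D G : N -> R) (q : N -> N -> R) (i : var) : R :=
  match i with inl (inl n) => D n | inl (inr n) => G n | inr (m, n) => q m n end.

Definition Dof (x : var -> R) (n : N) : R := x (inl (inl n)).
Definition Gof (x : var -> R) (n : N) : R := x (inl (inr n)).
Definition qof (x : var -> R) (m n : N) : R := x (inr (m, n)).

Lemma profile_of (x : var -> R) : profile (Dof x) (Gof x) (qof x) = x.
Proof. by apply: functional_extensionality => -[[n|n]|[m n]]. Qed.

Definition eD (n : N) (i : var) : R := if i is inl (inl n') then (n' == n)%:R else 0.
Definition eG (n : N) (i : var) : R := if i is inl (inr n') then (n' == n)%:R else 0.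
Definition eQ (p : N * N) (i : var) : R := if i is inr p' then (p' == p)%:R else 0.
Definition eQnet (n : N) (i : var) : R := \sum_(m | nbr P n m) eQ (m, n) i.

Lemma dot_eD n x : dot (eD n) x = x (inl (inl n)).
Proof. by rewrite /dot !big_sumType /= !sum_mul0l sum_delta_l !addr0. Qed.

Lemma dot_eG n x : dot (eG n) x = x (inl (inr n)).
Proof. by rewrite /dot !big_sumType /= !sum_mul0l sum_delta_l add0r addr0. Qed.

Lemma dot_eQ p x : dot (eQ p) x = x (inr p).
Proof. by rewrite /dot !big_sumType /= !sum_mul0l sum_delta_l !add0r. Qed.

Lemma dot_eQnet n x : dot (eQnet n) x = \sum_(m | nbr P n m) x (inr (m, n)).
Proof.
rewrite /dot /eQnet (eq_bigr (fun i => \sum_(m | nbr P n m) eQ (m, n) i * x i)).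
  by rewrite exchange_big; apply: eq_bigr => m _; exact: dot_eQ.
by move=> i _; rewrite mulr_suml.
Qed.

Lemma eQnet_at n m k : eQnet n (inr (m, k)) = (nbr P n m)%:R * (k == n)%:R.
Proof.
rewrite /eQnet /eQ; have [->|kn] := eqVneq k n; last first.
  by rewrite mulr0 big1 // => m' _; rewrite xpair_eqE (negPf kn) andbF.
rewrite mulr1 big_mkcond (bigD1 m) //= xpair_eqE !eqxx big1 ?addr0.
  by case: (nbr P n m).
by move=> m' /negPf m'm; rewrite xpair_eqE eq_sym m'm; case: ifP.
Qed.

Lemma sift_eD (f : N -> R) i :
  \sum_n f n * eD n i = if i is inl (inl n) then f n else 0.
Proof. by case: i => [[n|n]|p]; rewrite /= ?sum_delta_r ?sum_mul0r. Qed.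

Lemma sift_eG (f : N -> R) i :
  \sum_n f n * eG n i = if i is inl (inr n) then f n else 0.
Proof. by case: i => [[n|n]|p]; rewrite /= ?sum_delta_r ?sum_mul0r. Qed.

Lemma sift_eQ (f : N * N -> R) i :
  \sum_p f p * eQ p i = if i is inr p then f p else 0.
Proof. by case: i => [[n|n]|p]; rewrite /= ?sum_delta_r ?sum_mul0r. Qed.

Lemma sift_eQswap (f : N * N -> R) i :
  \sum_p f p * eQ (p.2, p.1) i = if i is inr p then f (p.2, p.1) else 0.
Proof.
case: i => [[n|n]|[m k]]; rewrite /= ?sum_mul0r // -[RHS](sum_delta_r (k, m)).
by apply: eq_bigr => -[a b] _; rewrite !xpair_eqE andbC.
Qed.

Lemma sift_eQnet (f : N -> R) i :
  \sum_n f n * eQnet n i = if i is inr (m, k) then (nbr P k m)%:R * f k else 0.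
Proof.
case: i => [[n|n]|[m k]] /=.
- by rewrite big1 // => n' _; rewrite /eQnet big1 ?mulr0.
- by rewrite big1 // => n' _; rewrite /eQnet big1 ?mulr0.
under eq_bigr do rewrite eQnet_at.
by rewrite sum_mulA sum_delta_r mulrC.
Qed.

(* The constraints (1)-(5) of (P) as rows and right-hand sides; a capacity
   or pairing row for a pair (m, n) that are not neighbours is zero. *)
Definition cDlo n : cst := inl (inl (inl n)).
Definition cDhi n : cst := inl (inl (inr n)).
Definition cGlo n : cst := inl (inr (inl n)).
Definition cGhi n : cst := inl (inr (inr n)).
Definition ccap p : cst := inr (inl (inl p)).
Definition cpair p : cst := inr (inl (inr p)).
Definition cbal n : cst := inr (inr (inl n)).
Definition cbal' n : cst := inr (inr (inr n)).

Definition row (j : cst) (i : var) : R :=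
  match j with
  | inl (inl (inl n)) => - eD n i
  | inl (inl (inr n)) => eD n i
  | inl (inr (inl n)) => - eG n i
  | inl (inr (inr n)) => eG n i
  | inr (inl (inl p)) => (nbr P p.2 p.1)%:R * eQ p i
  | inr (inl (inr p)) => (nbr P p.2 p.1)%:R * (eQ p i + eQ (p.2, p.1) i)
  | inr (inr (inl n)) => eD n i - eG n i - eQnet n i
  | inr (inr (inr n)) => - (eD n i - eG n i - eQnet n i)
  end.

Definition rhs (j : cst) : R :=
  match j with
  | inl (inl (inl n)) => - Dlo P n
  | inl (inl (inr n)) => Dhi P n
  | inl (inr (inl n)) => - Glo P n
  | inl (inr (inr n)) => Ghi P n
  | inr (inl (inl p)) => (nbr P p.2 p.1)%:R * kappa P p.1 p.2
  | inr (inl (inr p)) => 0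
  | inr (inr (inl n)) => dG P n
  | inr (inr (inr n)) => - dG P n
  end.

Definition lhs (j : cst) (x : var -> R) : R :=
  match j with
  | inl (inl (inl n)) => - x (inl (inl n))
  | inl (inl (inr n)) => x (inl (inl n))
  | inl (inr (inl n)) => - x (inl (inr n))
  | inl (inr (inr n)) => x (inl (inr n))
  | inr (inl (inl p)) => (nbr P p.2 p.1)%:R * x (inr p)
  | inr (inl (inr p)) => (nbr P p.2 p.1)%:R * (x (inr p) + x (inr (p.2, p.1)))
  | inr (inr (inl n)) =>
      x (inl (inl n)) - x (inl (inr n)) - \sum_(m | nbr P n m) x (inr (m, n))
  | inr (inr (inr n)) =>
      - (x (inl (inl n)) - x (inl (inr n)) - \sum_(m | nbr P n m) x (inr (m, n)))
  end.

Lemma dot_row j x : dot (row j) x = lhs j x.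
Proof.
by case: j => [[[n|n]|[n|n]]|[[p|p]|[n|n]]];
  rewrite /= ?dotNl ?dotZl ?dotDl ?dotBl ?dotNl ?dot_eD ?dot_eG ?dot_eQ ?dot_eQnet.
Qed.

Lemma feasible_iff D G q :
  feasible P D G q <-> forall j, lhs j (profile D G q) <= rhs j.
Proof.
split=> [feas|adm n].
  case=> [[[n|n]|[n|n]]|[[[m n]|[m n]]|[n|n]]] /=;
    have [/andP[Dlo_le le_Dhi] /andP[Glo_le le_Ghi] cap pair bal] := feas n;
    rewrite ?lerN2 // ?bal /Qnet.
  - by case nm: (nbr P n m); rewrite ?mul0r // !mul1r cap.
  - by case nm: (nbr P n m); rewrite ?mul0r // !mul1r pair.
  - lra.
  - lra.
have := adm (cDlo n); have := adm (cDhi n); have := adm (cGlo n); have := adm (cGhi n).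
have := adm (cbal n); have := adm (cbal' n); rewrite /= !lerN2 /Qnet.
move=> bal' bal -> -> -> ->; split=> // [m nm|m nm|].
- by have := adm (ccap (m, n)); rewrite /= nm !mul1r.
- by have := adm (cpair (m, n)); rewrite /= nm !mul1r.
- lra.
Qed.

Definition rowT (y : cst -> R) (i : var) : R :=
  match i with
  | inl (inl n) => y (cDhi n) - y (cDlo n) + y (cbal n) - y (cbal' n)
  | inl (inr n) => y (cGhi n) - y (cGlo n) - y (cbal n) + y (cbal' n)
  | inr p => (nbr P p.2 p.1)%:R *
      (y (ccap p) + y (cpair p) + y (cpair (p.2, p.1)) - y (cbal p.2) + y (cbal' p.2))
  end.

(* The constraint matrix, transposed; symmetry of the neighbour relation
   lets the pairing rows contribute with the same factor. *)
Lemma row_transpose (nbr_sym : forall n m, nbr P n m = nbr P m n) y i :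
  \sum_j y j * row j i = rowT y i.
Proof.
rewrite !big_sumType /= !sum_mulN !sum_mulA !sum_mulD !sum_mulN.
rewrite !sift_eD !sift_eG !sift_eQ !sift_eQswap !sift_eQnet.
case: i => [[n|n]|[m k]] /=; rewrite /cDlo /cDhi /cGlo /cGhi /cbal /cbal'; try ring.
by rewrite nbr_sym /ccap /cpair; ring.
Qed.

Definition welfare (x : var -> R) : R := SW P (Dof x) (Gof x) (qof x).

Definition grad (D G : N -> R) (i : var) : R :=
  match i with
  | inl (inl n) => - (2%:R * ua P n * (D n - Dstar P n))
  | inl (inr n) => - (ca P n * G n + cb P n)
  | inr p => - ((nbr P p.2 p.1)%:R * c P p.2 p.1)
  end.

Definition curv (d : var -> R) : R :=
  \sum_n (ua P n * d (inl (inl n)) ^+ 2 + ca P n * d (inl (inr n)) ^+ 2 / 2%:R).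

Lemma curv_ge0 (ua_ge0 : forall n, 0 <= ua P n) (ca_ge0 : forall n, 0 <= ca P n) d :
  0 <= curv d.
Proof.
apply: sumr_ge0 => n _; apply: addr_ge0; first exact: mulr_ge0 (ua_ge0 n) (sqr_ge0 _).
by apply: divr_ge0 => //; exact: mulr_ge0 (ca_ge0 n) (sqr_ge0 _).
Qed.

Lemma sum_trades (d : var -> R) :
  \sum_p ((nbr P p.2 p.1)%:R * c P p.2 p.1) * d (inr p) =
  \sum_n \sum_(m | nbr P n m) c P n m * d (inr (m, n)).
Proof.
under [RHS]eq_bigr do rewrite big_mkcond.
rewrite exchange_big pair_bigA; apply: eq_bigr => -[m n] _ /=.
by case: (nbr P n m); rewrite ?mul1r ?mul0r.
Qed.

Lemma welfare_expand D G q d t :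
  welfare (fun i => profile D G q i + t * d i) =
  SW P D G q + t * dot (grad D G) d - t ^+ 2 * curv d.
Proof.
rewrite /welfare /dot !big_sumType /= !sum_Nmul sum_trades /curv /SW.
rewrite !mulr_sumr -!sumrN -!big_split /= mulr_sumr -!big_split /=.
apply: eq_bigr => n _; rewrite /payoff /costCt /utilU /costC /Dof /Gof /qof /=.
under eq_bigr do rewrite mulrDr mulrCA.
by rewrite big_split /= -mulr_sumr; field.
Qed.

End Encoding.

Section Multipliers.
Context {N : finType} {R : realFieldType} {P : params N R}.
Hypothesis nbr_sym : forall n m, nbr P n m = nbr P m n.
Context {D G : N -> R} {q : N -> N -> R}.

Local Notation kkt_P :=
  (kkt_multipliers (row P) (rhs P) (grad P D G) (profile D G q)).

Lemma admissible_profile :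
  admissible (row P) (rhs P) (profile D G q) <-> feasible P D G q.
Proof.
rewrite feasible_iff; split=> adm j; have := adm j; by rewrite dot_row.
Qed.

(* The KKT multipliers of (P) built from the multipliers of a Variational
   Equilibrium: the symmetric zeta_{nm} = zeta_{mn} is shared equally by the
   two pairing constraints of (m, n) and (n, m), and lambda_n is split
   into its contributions to the two balance inequalities. *)
Section FromVE.
Variables (mul mu nul nu lam : N -> R) (xi zeta : N -> N -> R).
Hypothesis KKTn :
  forall n, KKT P D G q n (mul n) (mu n) (nul n) (nu n) (lam n) (xi n) (zeta n).
Hypothesis zeta_sym : forall n m, nbr P n m -> zeta n m = zeta m n.

Definition ve_multipliers (j : csts N) : R :=
  match j with
  | inl (inl (inl n)) => mul n
  | inl (inl (inr n)) => mu n
  | inl (inr (inl n)) => nul n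
  | inl (inr (inr n)) => nu n
  | inr (inl (inl p)) => if nbr P p.2 p.1 then xi p.2 p.1 else 0
  | inr (inl (inr p)) => if nbr P p.2 p.1 then zeta p.2 p.1 / 2%:R else 0
  | inr (inr (inl n)) => Num.max (lam n) 0
  | inr (inr (inr n)) => Num.max (lam n) 0 - lam n
  end.

Lemma ve_multipliers_compl j :
  0 <= ve_multipliers j /\
  ve_multipliers j * (rhs P j - dot (row P j) (profile D G q)) = 0.
Proof.
rewrite dot_row; case: j => [[[n|n]|[n|n]]|[[[m n]|[m n]]|[n|n]]] /=;
  have [_ [_ _ _ _ bal] [[mul_ge0 mul_c] [mu_ge0 mu_c] [nul_ge0 nul_c] [nu_ge0 nu_c]] qc]
    := KKTn n.
- by split=> //; rewrite -[RHS]mul_c; ring.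
- by split=> //; rewrite -[RHS]mu_c; ring.
- by split=> //; rewrite -[RHS]nul_c; ring.
- by split=> //; rewrite -[RHS]nu_c; ring.
- case nm: (nbr P n m); last by rewrite mul0r.
  by have [[xi_ge0 xi_c] _] := qc m nm; split=> //; rewrite -[RHS]xi_c !mul1r.
- case nm: (nbr P n m); last by rewrite mul0r.
  have [_ [zeta_ge0 zeta_c]] := qc m nm; split; first by rewrite divr_ge0.
  by rewrite mul1r sub0r opprD mulrAC zeta_c mul0r.
- by split; [rewrite le_max lexx orbT | rewrite bal /Qnet; ring].
- by split; [rewrite subr_ge0 le_max lexx | rewrite bal /Qnet; ring].
Qed.

Lemma ve_multipliers_stat i : grad P D G i = \sum_j ve_multipliers j * row P j i.
Proof.
rewrite row_transpose //; case: i => [[n|n]|[m n]] /=;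
  have [[stD stG stq] _ _ _] := KKTn n; rewrite /cDlo /cDhi /cGlo /cGhi /cbal /cbal'.
- by move: stD; lra.
- by move: stG; lra.
rewrite /ccap /cpair /=; case nm: (nbr P n m); rewrite ?mul0r ?oppr0 //.
by rewrite -nbr_sym nm -(zeta_sym n m nm) !mul1r; have := stq m nm; lra.
Qed.

End FromVE.

Lemma VE_kkt_multipliers : VE P D G q -> feasible P D G q /\ exists y, kkt_P y.
Proof.
move=> [mul [mu [nul [nu [lam [xi [zeta [KKTn zeta_sym]]]]]]]]; split.
  move=> n; have [_ [Dn Gn cap pair bal] _ _] := KKTn n; split=> // m nm.
  by move: (pair m nm); lra.
exists (ve_multipliers mul mu nul nu lam xi zeta); split.
  exact: ve_multipliers_compl.
exact: ve_multipliers_stat.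
Qed.

Lemma kkt_multipliers_VE : feasible P D G q -> (exists y, kkt_P y) -> VE P D G q.
Proof.
move=> feas [y [y_compl y_stat]].
exists (fun n => y (cDlo n)), (fun n => y (cDhi n)), (fun n => y (cGlo n)),
  (fun n => y (cGhi n)), (fun n => y (cbal n) - y (cbal' n)),
  (fun n m => y (ccap (m, n))), (fun n m => y (cpair (m, n)) + y (cpair (n, m))).
split=> [n|n m _]; last by rewrite addrC.
have [Dn Gn cap pair bal] := feas n.
have compl j : 0 <= y j /\ y j * (rhs P j - lhs P j (profile D G q)) = 0.
  by rewrite -dot_row.
have stat i := etrans (y_stat i) (row_transpose P nbr_sym y i).
split.
- split.
  + by have := stat (inl (inl n)); rewrite /=; lra.
  + by have := stat (inl (inr n)); rewrite /=; lra.
  + by move=> m nm; have := stat (inr (m, n)); rewrite /= nm !mul1r; lra.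
- by split=> // m nm; move: (pair m nm); lra.
- split.
  + by have [ge0 c] := compl (cDlo n); split=> //; rewrite -[RHS]c /=; ring.
  + by have [ge0 c] := compl (cDhi n); split=> //; rewrite -[RHS]c /=; ring.
  + by have [ge0 c] := compl (cGlo n); split=> //; rewrite -[RHS]c /=; ring.
  + by have [ge0 c] := compl (cGhi n); split=> //; rewrite -[RHS]c /=; ring.
move=> m nm; split.
  by have [ge0 c] := compl (ccap (m, n)); split=> //; rewrite -[RHS]c /= nm !mul1r.
have [ge0 c] := compl (cpair (m, n)); have [ge0' c'] := compl (cpair (n, m)).
split; first by rewrite addr_ge0.
move: c c'; rewrite /= nm -nbr_sym nm !mul1r => c c'.
have -> : (y (cpair (m, n)) + y (cpair (n, m))) * (- q m n - q n m) =
  y (cpair (m, n)) * (0 - (q m n + q n m)) + y (cpair (n, m)) * (0 - (q n m + q m n)).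
  by ring.
by rewrite c c' addr0.
Qed.

End Multipliers.

Theorem proposition6 (N : finType) (R : realFieldType) (P : params N R) :
  valid_params P ->
  forall (D G : N -> R) (q : N -> N -> R),
    VE P D G q <-> optimal P D G q.
Proof.
move=> [_ Om_sym _ [_ _ _ pos _]] D G q.
have nbr_sym n m : nbr P n m = nbr P m n by rewrite /nbr Om_sym eq_sym.
have curv_nonneg d : 0 <= curv P d.
  by apply: curv_ge0 => n; have [ca_gt0 _ _ ua_gt0 _] := pos n; exact: ltW.
have expand := welfare_expand P D G q.
have kkt_P (feas : feasible P D G q) :=
  kkt_iff curv_nonneg expand (proj2 admissible_profile feas).
split.
  move=> /(VE_kkt_multipliers nbr_sym) [feas kkt]; split=> // D' G' q'.
  by move=> /admissible_profile; exact: (proj2 (kkt_P feas) kkt).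
move=> [feas opt]; apply: (kkt_multipliers_VE nbr_sym feas).
apply/(kkt_P feas) => x; rewrite -(profile_of x) => /admissible_profile.
exact: opt.
Qed.
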